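(* Let $X$ be a Banach space and $(x_n)_{n\in\mathbb{N}}$ a sequence in $X$ with $\liminf_n \|x_n\|=0$, and let $\mathcal{I}$ be an ideal on $\mathbb{N}$ with the Baire property. Suppose that there exists $s\in S$ such that $\left(\sum_{i=1}^n x_{s(i)}\right)_n$ is unbounded (equivalently, there exists $p\in P$ such that $\left(\sum_{i=1}^n x_{p(i)}\right)_n$ is unbounded). Then the sets $E(\mathcal{I},(x_n))=\left\{s \in S : \left(\sum_{i=1}^n x_{s(i)}\right)_n \text{ is } \mathcal{I}\text{-bounded}\right\}$ and $F(\mathcal{I},(x_n))=\left\{p \in P : \left(\sum_{i=1}^n x_{p(i)}\right)_n \text{ is } \mathcal{I}\text{-bounded}\right\}$ are meager in $S$ and $P$, respectively.
   Context: An ideal on $\mathbb{N}$ is a family $\mathcal{I}\subset \mathcal{P}(\mathbb{N})$ with $\emptyset\in\mathcal{I}$, closed under finite unions and subsets, with $\mathbb{N}\notin\mathcal{I}$ and containing all finite subsets of $\mathbb{N}$. Identifying $\mathcal{P}(\mathbb{N})$ with $\{0,1\}^{\mathbb{N}}$ (product topology), $\mathcal{I}$ has the Baire property if it is the symmetric difference of an open set and a meager set. A sequence $(y_n)$ in a normed space is $\mathcal{I}$-bounded if there is $M>0$ with $\{n\in\mathbb{N} : \|y_n\|>M\}\in\mathcal{I}$. $S=\{s\in\mathbb{N}^{\mathbb{N}} : s \text{ strictly increasing}\}$, $P=\{p\in\mathbb{N}^{\mathbb{N}} : p \text{ a bijection of }\mathbb{N}\}$, with the subspace topology of $\mathbb{N}^{\mathbb{N}}$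 (product of discrete spaces). *)

From HB Require Import structures.
From mathcomp Require Import all_boot all_order all_algebra.
From mathcomp Require Import all_classical all_reals all_analysis.
Set Implicit Arguments. Unset Strict Implicit. Unset Printing Implicit Defensive.
Import Order.TTheory GRing.Theory Num.Theory.
Import numFieldNormedType.Exports.
Local Open Scope classical_set_scope.
Local Open Scope ring_scope.

Definition nowhere_dense {T : topologicalType} (A : set T) : Prop :=
  interior (closure A) = set0.

Definition meager {T : topologicalType} (A : set T) : Prop :=
  exists F : (set T)^nat, (forall n, nowhere_dense (F n)) /\ A `<=` \bigcup_n F n.

Definition is_ideal (I : set (set nat)) : Prop :=
  [/\ I set0,
      (forall A B, I A -> I B -> I (A `|` B)),
      (forall A B, B `<=` A -> I A -> I B),
      ~ I setT &
      (forall A, finite_set A -> I A)].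

(* P(nat) identified with {0,1}^nat (product topology, bool discrete). *)
Definition ideal_as_subset (I : set (set nat)) : set {ptws nat -> bool} :=
  [set f | I [set n | f n]].

Definition has_Baire_property {T : topologicalType} (A : set T) : Prop :=
  exists U M : set T, [/\ open U, meager M & A = (U `\` M) `|` (M `\` U)].

Definition I_bounded {R : realType} {X : normedModType R}
  (I : set (set nat)) (y : nat -> X) : Prop :=
  exists2 M : R, 0 < M & I [set n | M < `|y n|].

Definition Sset : set {ptws nat -> nat} := [set s | forall m n, (m < n)%N -> (s m < s n)%N].
Definition Pset : set {ptws nat -> nat} := [set p | bijective p].

(* n-th partial sum x_{s 0} + ... + x_{s n} (indices start at 0). *)
Definition psum {R : realType} {X : normedModType R} (x : nat -> X) (s : nat -> nat)
  : nat -> X := fun n => \sum_(0 <= i < n.+1) x (s i).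

Definition Eset {R : realType} {X : normedModType R} (I : set (set nat)) (x : nat -> X)
  : set (set_type Sset) := [set s | I_bounded I (psum x (set_val s))].

Definition Fset {R : realType} {X : normedModType R} (I : set (set nat)) (x : nat -> X)
  : set (set_type Pset) := [set p | I_bounded I (psum x (set_val p))].

From HB Require Import structures.
From mathcomp Require Import all_boot all_order all_algebra.
From mathcomp Require Import all_classical all_reals all_analysis.
From mathcomp Require Import zify.
Import Order.TTheory GRing.Theory Num.Theory.
Import numFieldNormedType.Exports.
Local Open Scope classical_set_scope.
Local Open Scope ring_scope.
Set Implicit Arguments. Unset Strict Implicit.

(* An ideal with the Baire property is meager: otherwise it is comeager in
   some cylinder, and so is its image under the map flipping every bit beyond
   the cylinder's length; a set A of the ideal whose flip is also in the ideal
   then covers N together with a finite set.  So I lies in a union of nowhere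
   dense sets F_n.  If s is I-bounded, its exceedance set
   A = {i | M < |x_(s 0) + ... + x_(s i)|} is in I, and by the Baire category
   theorem in the compact space of subsets of A some F_n is dense in a basic
   open set of that space, given by a finite pattern.  This covers E (and F)
   by countably many pattern sets, indexed by M, n and the pattern, each of
   them nowhere dense: any finite initial segment can be continued by a block
   of the unbounded rearrangement, pushing the partial sum above M + 1, and
   then by terms so small (liminf |x_n| = 0) that the partial sums stay above
   M for as long as needed; this steers the exceedance set into a cylinder
   avoiding the closure of F_n.  The continuations are increasing and fresh,
   hence realisable both by increasing sequences and by permutations. *)

Definition cylinder {T : Type} (f : nat -> T) (m : nat) : set (nat -> T) :=
  [set g | forall i, (i < m)%N -> g i = f i].

Definition splice {T : Type} (m : nat) (f g : nat -> T) : nat -> T :=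
  fun i => if (i < m)%N then f i else g i.

Lemma cylinderS {T : Type} (f : nat -> T) m m' :
  (m <= m')%N -> cylinder f m' `<=` cylinder f m.
Proof. by move=> mm' g fg i im; apply: fg; exact: leq_trans im mm'. Qed.

Lemma cylinder_trans {T : Type} (f g : nat -> T) m m' :
  (m <= m')%N -> cylinder f m g -> cylinder g m' `<=` cylinder f m.
Proof. by move=> mm' fg h gh i im; rewrite (cylinderS mm' gh im); exact: fg. Qed.

Lemma cylinder_splice {T : Type} m (f g : nat -> T) : cylinder f m (splice m f g).
Proof. by move=> i im; rewrite /splice im. Qed.

Lemma cylinder_chain_limit {T : Type} (g : nat -> nat -> T) (m : nat -> nat) :
  (forall k, (m k < m k.+1)%N /\ cylinder (g k) (m k) (g k.+1)) ->
  forall k, cylinder (g k) (m k) (fun i => g i.+1 i).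
Proof.
move=> chain.
have chain_le a b : (a <= b)%N -> (m a <= m b)%N /\ cylinder (g a) (m a) (g b).
  elim: b => [|b IH]; first by rewrite leqn0 => /eqP ->.
  rewrite leq_eqVlt => /orP[/eqP -> //|/IH [mab gab]].
  have [mb gb] := chain b.
  by split; [exact: leq_trans mab (ltnW mb) | exact: cylinder_trans mab gab _ gb].
have m_ge k : (k <= m k)%N.
  by elim: k => // k IH; exact: leq_ltn_trans IH (chain k).1.
move=> k i ik /=; have [ki|ik'] := leqP k i.+1.
  by rewrite ((chain_le _ _ ki).2 i ik).
by rewrite ((chain_le _ _ (ltnW ik')).2 i (m_ge i.+1)).
Qed.

Lemma fusion {T : Type} (Inv : (nat -> T) -> nat -> Prop)
    (Good : nat -> (nat -> T) -> nat -> Prop) (g0 : nat -> T) (m0 : nat) :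
  Inv g0 m0 ->
  (forall n g m, Inv g m -> exists g' m',
     [/\ (m < m')%N, cylinder g m g', Inv g' m' & Good n g' m']) ->
  exists A, cylinder g0 m0 A /\
    forall n, exists g m, [/\ Good n g m, (n < m)%N & cylinder g m A].
Proof.
move=> Inv0 step.
have /choice [next nextP] : forall np : nat * ((nat -> T) * nat), exists p,
    Inv np.2.1 np.2.2 -> [/\ (np.2.2 < p.2)%N, cylinder np.2.1 np.2.2 p.1,
                             Inv p.1 p.2 & Good np.1 p.1 p.2].
  move=> [n [g m]]; have [Igm|nIgm] := pselect (Inv g m); last by exists (g, m).
  by have [g' [m' ?]] := step n g m Igm; exists (g', m') => _.
pose chain := fix chain k := if k is k'.+1 then next (k', chain k') else (g0, m0).
have Inv_chain k : Inv (chain k).1 (chain k).2.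
  by elim: k => //= k IH; case: (nextP (k, chain k) IH).
have chainS k := nextP (k, chain k) (Inv_chain k).
have m_ge k : (k <= (chain k).2)%N.
  by elim: k => // k IH; case: (chainS k) => lt _ _ _; exact: leq_ltn_trans IH lt.
have limA : forall k, cylinder (chain k).1 (chain k).2 (fun i => (chain i.+1).1 i).
  apply: (cylinder_chain_limit (g := fun k => (chain k).1) (m := fun k => (chain k).2)).
  by move=> k; case: (chainS k).
exists (fun i => (chain i.+1).1 i); split; first exact: (limA 0%N).
move=> n; exists (chain n.+1).1, (chain n.+1).2; split; last exact: limA.
- by case: (chainS n).
- exact: m_ge.
Qed.

Lemma nowhere_dense_avoid (T : topologicalType) (D : set T) :
  (forall U, open U -> U !=set0 ->
     exists V, [/\ open V, V !=set0 & V `<=` U `\` D]) ->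
  nowhere_dense D.
Proof.
move=> avoidD; apply/seteqP; split=> // x Dx.
have [V [oV [y Vy] VUD]] := avoidD _ (@open_interior _ _) (ex_intro _ x Dx).
have /interior_subset clDy := (VUD _ Vy).1.
have [z [Dz Vz]] := clDy V (open_nbhs_nbhs (conj oV Vy)).
by have [] := VUD _ Vz.
Qed.

Section DiscreteCylinders.
Variable T : discreteUniformType.

Lemma nbhs_cylinder (f : {ptws nat -> T}) (U : set {ptws nat -> T}) :
  nbhs f U -> exists m, cylinder f m `<=` U.
Proof.
have cylF : Filter (filter_from setT (cylinder f)).
  apply: filter_from_filter; first by exists 0%N.
  move=> i j _ _; exists (maxn i j) => // g fg.
  by split; apply: cylinderS fg; rewrite ?leq_maxl ?leq_maxr.
have : {ptws, filter_from setT (cylinder f) --> f}.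
  apply/pointwise_cvgP => i A /=; rewrite nbhs_principalE => Afi.
  by exists i.+1 => // g fg /=; rewrite fg //; exact/principal_filterP.
by move=> cvgf /cvgf [m _ fmU]; exists m.
Qed.

Lemma open_cylinder (f : nat -> T) m : open (cylinder f m : set {ptws nat -> T}).
Proof.
elim: m => [|m IH].
  have -> : cylinder f 0 = setT by apply/seteqP; split=> // g _ i.
  exact: openT.
have -> : cylinder f m.+1 = cylinder f m `&` (proj m @^-1` [set f m]).
  apply/seteqP; split=> g.
    by move=> fg; split; [exact: cylinderS fg | exact: fg].
  move=> [fg gm] i; rewrite ltnS leq_eqVlt => /orP[/eqP ->|im] //; exact: fg.
apply: openI => //; apply: open_comp => [g _|]; last exact: discrete_open.
exact: proj_continuous.
Qed.

Lemma closed_avoid_cylinder (C : set {ptws nat -> T}) (f : {ptws nat -> T}) :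
  closed C -> ~ C f -> exists q, cylinder f q `<=` ~` C.
Proof.
move=> cC nCf; apply: nbhs_cylinder; apply: open_nbhs_nbhs; split=> //.
exact/closed_openC.
Qed.

Lemma nowhere_dense_avoid_cylinder (F : set {ptws nat -> T}) (f : nat -> T) m :
  nowhere_dense F -> exists g q,
    [/\ (m <= q)%N, cylinder f m g & cylinder g q `<=` ~` closure F].
Proof.
move=> ndF.
have [g [fg nFg]] : exists g, cylinder f m g /\ ~ closure F g.
  apply: contrapT => noG.
  have : (closure F)° (f : {ptws nat -> T}).
    apply: (@filterS _ _ _ (cylinder f m)).
      by move=> g fg; apply: contrapT => nFg; apply: noG; exists g.
    by apply: open_nbhs_nbhs; split; [exact: open_cylinder | move].
  by rewrite ndF.
have [q gF] := closed_avoid_cylinder (@closed_closure _ F) nFg.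
exists g, (maxn q m); split=> //; first exact: leq_maxr.
by apply: subset_trans gF; apply: cylinderS; exact: leq_maxl.
Qed.

Section Subspace.
Variable Q : set {ptws nat -> T}.

Lemma nbhs_subspace_cylinder (s : set_type Q) (U : set (set_type Q)) :
  nbhs s U -> exists m, set_val @^-1` cylinder (set_val s) m `<=` U.
Proof.
rewrite nbhsE => -[V [[W oW <-] Ws] VU].
have [m sW] := nbhs_cylinder (open_nbhs_nbhs (conj oW Ws)).
by exists m => t /sW; exact: VU.
Qed.

Lemma open_subspace_cylinder (f : nat -> T) m :
  open (set_val @^-1` cylinder f m : set (set_type Q)).
Proof. by exists (cylinder f m : set {ptws nat -> T}) => //; exact: open_cylinder. Qed.

Lemma nowhere_dense_subspace_cylinder (D : set (set_type Q)) :
  (forall (s0 : set_type Q) m0, exists (s : set_type Q) q,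
     [/\ (m0 <= q)%N, cylinder (set_val s0) m0 (set_val s)
       & set_val @^-1` cylinder (set_val s) q `<=` ~` D]) ->
  nowhere_dense D.
Proof.
move=> avoidD; apply: nowhere_dense_avoid => U oU [s0 Us0].
have [m0 s0U] := nbhs_subspace_cylinder (open_nbhs_nbhs (conj oU Us0)).
have [s [q [m0q s0s sD]]] := avoidD s0 m0.
exists (set_val @^-1` cylinder (set_val s) q); split.
- exact: open_subspace_cylinder.
- by exists s.
- by move=> t st; split; [apply: s0U; exact: cylinder_trans m0q s0s _ st | exact: sD].
Qed.

End Subspace.
End DiscreteCylinders.

Definition flip_from (q : nat) (f g : nat -> bool) : nat -> bool :=
  splice q f (fun i => ~~ g i).

Lemma nowhere_dense_avoid_flip (F : set {ptws nat -> bool}) (f0 g : nat -> bool) q m :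
  nowhere_dense F -> (q <= m)%N -> cylinder f0 q g ->
  exists g' m', [/\ (m < m')%N, cylinder g m g', cylinder f0 q g' &
    forall h, cylinder g' m' h -> ~ closure F h /\ ~ closure F (flip_from q f0 h)].
Proof.
move=> ndF qm f0g.
have [g1 [q1 [mq1 gg1 g1F]]] := nowhere_dense_avoid_cylinder g m ndF.
have [g2 [q2 [q1q2 g1g2 g2F]]] := nowhere_dense_avoid_cylinder (flip_from q f0 g1) q1 ndF.
have g1_flip h : cylinder (flip_from q f0 g2) q2 h -> cylinder g1 q1 h.
  move=> g2h i iq1; rewrite g2h ?(leq_trans iq1 q1q2) // /flip_from /splice.
  case: ifP => iq; first by rewrite gg1 ?f0g // (leq_trans iq qm).
  by rewrite g1g2 // /flip_from /splice iq negbK.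
exists (flip_from q f0 g2), q2.+1; split.
- by rewrite ltnS (leq_trans mq1 q1q2).
- exact: cylinder_trans mq1 gg1 _ (g1_flip _ (fun _ _ => erefl)).
- exact: cylinder_splice.
- move=> h g2h; split; first exact/g1F/g1_flip/(cylinderS (leqnSn q2) g2h).
  apply: g2F => i iq2; rewrite /flip_from /splice; case: ifP => iq.
    by rewrite g1g2 ?(leq_trans iq (leq_trans qm mq1)) // /flip_from /splice iq.
  by rewrite (g2h _ (ltnW iq2)) /flip_from /splice /= iq negbK.
Qed.

Lemma Baire_property_ideal_meager (I : set (set nat)) :
  is_ideal I -> has_Baire_property (ideal_as_subset I) -> meager (ideal_as_subset I).
Proof.
case=> _ IU _ IT Ifin [U [M [oU [F [ndF MF]] eqI]]].
have nM h : (forall n, ~ closure (F n) h) -> ~ M h.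
  by move=> nFh /MF [n _ /subset_closure]; exact: nFh.
have [U0|/set0P [f0 Uf0]] := eqVneq U set0.
  by exists F; split=> // f; rewrite eqI U0 => -[[]|[/MF]].
have [q qU] := nbhs_cylinder (open_nbhs_nbhs (conj oU Uf0)).
have inI h : cylinder f0 q h -> (forall n, ~ closure (F n) h) -> I [set i | h i].
  move=> f0h nFh; change (ideal_as_subset I h); rewrite eqI.
  by left; split; [exact: qU | exact: nM].
pose Inv (g : nat -> bool) m := (q <= m)%N /\ cylinder f0 q g.
pose Good n (g : nat -> bool) m := forall h, cylinder g m h ->
  ~ closure (F n) h /\ ~ closure (F n) (flip_from q f0 h).
have step n g m : Inv g m -> exists g' m',
    [/\ (m < m')%N, cylinder g m g', Inv g' m' & Good n g' m'].
  move=> [qm f0g].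
  have [g' [m' [mm' gg' f0g' good]]] := nowhere_dense_avoid_flip (ndF n) qm f0g.
  by exists g', m'; split=> //; split=> //; exact: leq_trans qm (ltnW mm').
have [A [f0A GA]] := fusion (conj (leqnn q) (fun _ _ => erefl)) step.
have goodA n : ~ closure (F n) A /\ ~ closure (F n) (flip_from q f0 A).
  by have [g [m [good _ gA]]] := GA n; exact: good.
exfalso; apply: IT.
have -> : [set: nat] = [set i | A i] `|` [set i | flip_from q f0 A i] `|` `I_q.
  apply/seteqP; split=> // i _ /=; rewrite /flip_from /splice.
  by case: ltnP => iq; [right | case: (A i); [left; left | left; right]].
apply: (IU _ _ _ (Ifin _ (finite_II q))); apply: IU; apply: inI.
- exact: f0A.
- by move=> n; case: (goodA n).
- exact: cylinder_splice.
- by move=> n; case: (goodA n).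
Qed.

Lemma hereditary_cover_pattern (I : set (set nat)) (F : (set {ptws nat -> bool})^nat) :
  (forall A B, B `<=` A -> I A -> I B) -> ideal_as_subset I `<=` \bigcup_n F n ->
  forall A, I A -> exists n m (us : seq bool), (forall i, nth false us i -> A i) /\
    forall B : nat -> bool, (forall i, B i -> A i) -> cylinder (nth false us) m B ->
      closure (F n) B.
Proof.
move=> Isub IF A IA; apply: contrapT => noPattern.
have escape n m (us : seq bool) : (forall i, nth false us i -> A i) ->
    exists B : nat -> bool,
      [/\ forall i, B i -> A i, cylinder (nth false us) m B & ~ closure (F n) B].
  move=> usA; apply: contrapT => noB; apply: noPattern; exists n, m, us; split=> // B BA usB.
  by apply: contrapT => nFB; apply: noB; exists B.
pose Inv (g : nat -> bool) (_ : nat) := forall i, g i -> A i.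
pose Good n g m := Inv g m /\ cylinder g m `<=` ~` closure (F n).
have step n g m : Inv g m -> exists g' m',
    [/\ (m < m')%N, cylinder g m g', Inv g' m' & Good n g' m'].
  move=> gA.
  have usA i : nth false (mkseq g m) i -> A i.
    by case: (ltnP i m) => im; [rewrite nth_mkseq //; exact: gA | rewrite nth_default ?size_mkseq].
  have [B [BA usB nFB]] := escape n m _ usA.
  have [q BF] := closed_avoid_cylinder (@closed_closure _ (F n)) nFB.
  exists B, (maxn q m.+1); split=> //.
  - exact: leq_maxr.
  - by move=> i im; rewrite usB // nth_mkseq.
  - by split=> //; apply: subset_trans BF; apply: cylinderS; exact: leq_maxl.
have Inv0 : Inv (fun=> false) 0%N by [].
have [L [_ GL]] := fusion Inv0 step.
have LA i : L i -> A i.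
  by have [g [m [[gA _] im gL]]] := GL i; rewrite gL //; exact: gA.
have [n _ FnL] := IF L (Isub _ _ LA IA).
have [g [m [[_ gF] _ gL]]] := GL n.
exact: gF L gL (subset_closure FnL).
Qed.

Lemma limn_einf_lt_frequently (R : realType) (u : R^nat) (e : R) :
  (limn_einf (fun n => (u n)%:E) < e%:E)%E -> forall N, exists2 n, (N <= n)%N & u n < e.
Proof.
move=> infe N; apply: contrapT => noSmall.
have e_einfs : (e%:E <= einfs (fun n => (u n)%:E) N)%E.
  apply/ereal_infP => _ [n /= Nn <-]; rewrite lee_fin leNgt; apply/negP => une.
  by apply: noSmall; exists n.
have einfs_lim : (einfs (fun n => (u n)%:E) N <= limn_einf (fun n => (u n)%:E))%E.
  rewrite limn_einf_lim (cvg_lim _ (@cvg_einfs_sup _ _)) //.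
  by apply: ereal_sup_ubound; exists N.
by have := le_lt_trans (le_trans e_einfs einfs_lim) infe; rewrite ltxx.
Qed.

Definition increasing_from (m : nat) (s : nat -> nat) : Prop :=
  forall a b, (a < b)%N -> (m <= b)%N -> (s a < s b)%N.

Definition extendable (Q : set {ptws nat -> nat}) : Prop :=
  forall s0 s m q, Q s0 -> cylinder s0 m s -> increasing_from m s ->
    exists2 s', Q s' & cylinder s q s'.

Lemma Sset_leq_id (t : nat -> nat) : Sset t -> forall k, (k <= t k)%N.
Proof. by move=> tS; elim=> // k IH; exact: leq_ltn_trans IH (tS _ _ (ltnSn k)). Qed.

Lemma Sset_extendable : extendable Sset.
Proof.
move=> s0 s m q s0S s0s incs; exists s => // a b ab.
have [bm|mb] := ltnP b m; last exact: incs.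
by rewrite !s0s ?(ltn_trans ab bm) //; exact: s0S.
Qed.

Definition swapn (a b z : nat) : nat := if z == a then b else if z == b then a else z.

Lemma swapnK a b : involutive (swapn a b).
Proof.
move=> z; rewrite /swapn.
have [->|za] := eqVneq z a; first by rewrite eqxx; case: eqVneq.
have [->|zb] := eqVneq z b; first by rewrite eqxx.
by rewrite (negPf za) (negPf zb).
Qed.

Lemma injective_prefix_bijective (f : nat -> nat) q :
  (forall a b, (a < q)%N -> (b < q)%N -> f a = f b -> a = b) ->
  exists2 p, bijective p & cylinder f q p.
Proof.
move=> finj.
pose p := fix p k := if k is k'.+1 then swapn (p k' k') (f k') \o p k' else id.
have p_bij k : bijective (p k).
  elim: k => [|k IH] /=; first by exists id.
  by apply: bij_comp => //; exact: inv_bij (swapnK _ _).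
have p_f k : (k <= q)%N -> cylinder f k (p k).
  elim: k => [|k IH] kq i //=; rewrite ltnS leq_eqVlt => /orP[/eqP ->|ik].
    by rewrite /swapn eqxx.
  have pf := IH (ltnW kq); rewrite /= (pf i ik) /swapn.
  have -> : (f i == p k k) = false.
    apply/negP => /eqP; rewrite -(pf i ik) => /(bij_inj (p_bij k)) ei.
    by rewrite ei ltnn in ik.
  have -> : (f i == f k) = false.
    apply/negP => /eqP /(finj _ _ (ltn_trans ik kq) kq) ei.
    by rewrite ei ltnn in ik.
  by [].
by exists (p q); [exact: p_bij | exact: p_f].
Qed.

Lemma Pset_extendable : extendable Pset.
Proof.
move=> s0 s m q s0P s0s incs.
have s_neq a b : (a < b)%N -> s a != s b.
  move=> ab; have [bm|mb] := ltnP b m; last by rewrite neq_ltn incs.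
  rewrite !s0s ?(ltn_trans ab bm) //.
  by apply: contraTneq ab => /(bij_inj s0P) ->; rewrite ltnn.
have s_inj : injective s.
  by move=> a b sab; case: (ltngtP a b) => // ab; have := s_neq _ _ ab; rewrite sab eqxx.
exact: injective_prefix_bijective (fun a b _ _ => @s_inj a b).
Qed.

Section PartialSums.
Variables (R : realType) (X : normedModType R) (x : nat -> X).

Lemma psum_cylinder (s s' : nat -> nat) k : cylinder s k.+1 s' -> psum x s' k = psum x s k.
Proof. by move=> ss'; apply: eq_big_nat => i /andP[_ ik]; rewrite ss'. Qed.

Lemma psum_splice m (f g : nat -> nat) k : (m <= k.+1)%N ->
  psum x (splice m f g) k = \sum_(0 <= i < m) x (f i) + \sum_(m <= i < k.+1) x (g i).
Proof.
move=> mk; rewrite /psum (big_cat_nat (leq0n m) mk) /=.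
congr (_ + _); apply: eq_big_nat => i /andP[mi ik]; rewrite /splice.
  by rewrite ik.
by rewrite ltnNge mi.
Qed.

Lemma unbounded_tail (y : nat -> X) : ~ (exists M : R, forall n, `|y n| <= M) ->
  forall B N, exists2 n, (N <= n)%N & B < `|y n|.
Proof.
move=> unb B N; apply: contrapT => noBig; apply: unb.
exists (Num.max B (\sum_(k < N) `|y k|)) => n; rewrite le_max.
have [nN|Nn] := ltnP n N.
  apply/orP; right; rewrite (bigD1 (Ordinal nN)) //= lerDl.
  by apply: sumr_ge0 => i _.
by apply/orP; left; rewrite leNgt; apply/negP => Bn; apply: noBig; exists n.
Qed.

Definition psum_gt (B : R) (s : nat -> nat) (i : nat) : bool := B < `|psum x s i|.

Lemma psum_gt_cylinder B (s s' : nat -> nat) m i :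
  cylinder s m s' -> (i < m)%N -> psum_gt B s' i = psum_gt B s i.
Proof. by move=> ss' im; rewrite /psum_gt (psum_cylinder (cylinderS im ss')). Qed.

Variables (t : nat -> nat) (tS : Sset t)
  (tU : ~ (exists M : R, forall n, `|psum x t n| <= M)).

Lemma extend_to_large_psum (B : R) (s0 : nat -> nat) (m : nat) :
  exists s k, [/\ (m <= k)%N, cylinder s0 m s, increasing_from m s & B < `|psum x s k|].
Proof.
(* d exceeds every s0 i with i < m, and t i >= i, so the shifted block of t is fresh. *)
set d := (\sum_(i < m) s0 i).+1.
pose s := splice m s0 (fun i => t (i + d)%N).
pose c := \sum_(0 <= i < m) x (s0 i) - \sum_(0 <= i < m + d) x (t i).
have psum_s k : (m <= k)%N -> psum x s k = c + psum x t (k + d).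
  move=> mk; rewrite psum_splice ?(leqW mk) //.
  rewrite /psum (@big_cat_nat _ _ _ (m + d) 0 (k + d).+1) //=; last by lia.
  rewrite big_addn (_ : ((k + d).+1 - d = k.+1)%N); last by lia.
  by rewrite /c addrA subrK.
have [n mdn Bn] := unbounded_tail tU (B + `|c|) (m + d).
exists s, (n - d)%N; split.
- lia.
- exact: cylinder_splice.
- move=> a b ab mb; rewrite /s /splice (ltnNge b) mb /=.
  case: (ltnP a m) => am; last by have := ab; rewrite -(ltn_add2r d); exact: tS.
  apply: leq_trans (Sset_leq_id tS _).
  have : (s0 a <= \sum_(i < m) s0 i)%N by rewrite (bigD1 (Ordinal am)) //= leq_addr.
  rewrite /d; lia.
- rewrite psum_s; last by lia.
  rewrite (_ : (n - d + d = n)%N); last by lia.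
  by rewrite addrC; apply: lt_le_trans (lerB_normD _ _); rewrite ltrBrDr.
Qed.

Variable small : forall e : R, 0 < e -> forall N, exists2 n, (N <= n)%N & `|x n| < e.

Lemma small_terms_subsequence (e : R) N : 0 < e ->
  exists g : nat -> nat, [/\ (N < g 0)%N, Sset g & forall k, `|x (g k)| < e].
Proof.
move=> e0.
have /choice [next nextP] : forall a, exists b, (a < b)%N /\ `|x b| < e.
  by move=> a; have [b ab xb] := small e0 a.+1; exists b.
exists (fun k => iter k.+1 next N); split.
- exact: (nextP N).1.
- move=> a b; apply: (@homo_ltn _ (fun k => iter k.+1 next N) (fun i j => (i < j)%N)) => [? ? ?|k].
    exact: ltn_trans.
  exact: (nextP _).1.
- by move=> k; exact: (nextP _).2.
Qed.

Lemma extend_by_small_terms (B : R) (s : nat -> nat) m k q :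
  (m <= k)%N -> increasing_from m s -> B + 1 < `|psum x s k| ->
  exists s', [/\ cylinder s k.+1 s', increasing_from m s' &
    forall j, (k <= j < q)%N -> B < `|psum x s' j|].
Proof.
move=> mk incs big.
(* At most q small terms precede index q, so their sum has norm < 1. *)
pose e : R := (q.+1)%:R^-1.
have e0 : 0 < e by rewrite invr_gt0 ltr0n.
have [g [sg gS gsmall]] := small_terms_subsequence (s k) e0.
have g_mono : {homo g : a b / (a <= b)%N}.
  by apply: homo_leq => [a|a b c|a]; [exact: leqnn | exact: leq_trans | exact/ltnW/gS].
have s_le a : (a <= k)%N -> (s a <= s k)%N.
  by rewrite leq_eqVlt => /orP[/eqP -> // | ak]; exact/ltnW/incs.
exists (splice k.+1 s (fun i => g (i - k.+1)%N)); split.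
- exact: cylinder_splice.
- move=> a b ab mb; rewrite /splice.
  have [bk|kb] := ltnP b k.+1; first by rewrite (ltn_trans ab bk); exact: incs.
  have [ak|ka] := ltnP a k.+1; last by apply: gS; lia.
  exact: leq_ltn_trans (s_le _ ak) (leq_trans sg (g_mono _ _ (leq0n _))).
- move=> j /andP[kj jq]; rewrite psum_splice //.
  have tail1 : `|\sum_(k.+1 <= i < j.+1) x (g (i - k.+1)%N)| < 1.
    apply: le_lt_trans (ler_norm_sum _ _ _) _.
    apply: (@le_lt_trans _ _ (\sum_(k.+1 <= i < j.+1) e)).
      by apply: ler_sum_nat => i _; exact/ltW/gsmall.
    rewrite sumr_const_nat -mulr_natl ltr_pdivrMr ?ltr0n // mul1r ltr_nat; lia.
  apply: lt_le_trans (lerB_normD _ _); rewrite ltrBrDr.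
  by apply: lt_trans big; rewrite ltrD2l.
Qed.

Definition pattern_set (F : set {ptws nat -> bool}) (B : R) (m : nat) (u : nat -> bool)
    : set (nat -> nat) :=
  [set s | (forall i, u i -> psum_gt B s i) /\
     forall A : nat -> bool, (forall i, A i -> psum_gt B s i) -> cylinder u m A ->
       closure F A].

Lemma nowhere_dense_pattern_set (Q : set {ptws nat -> nat}) (F : set {ptws nat -> bool})
    B m u :
  extendable Q -> nowhere_dense F ->
  nowhere_dense (set_val @^-1` pattern_set F B m u : set (set_type Q)).
Proof.
move=> extQ ndF; apply: nowhere_dense_subspace_cylinder => s0 m0'.
pose m0 := maxn m0' m.
have [s1 [k [m0k s0s1 inc1 big]]] := extend_to_large_psum (B + 1) (set_val s0) m0.
have [w [q [kq w0w wF]]] :=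
  nowhere_dense_avoid_cylinder (splice m u (psum_gt B s1)) k.+1 ndF.
have [s2 [s1s2 inc2 big2]] := extend_by_small_terms q m0k inc1 big.
have s0s2 : cylinder (set_val s0) m0 s2 := cylinder_trans (leqW m0k) s0s1 s1s2.
have [s Qs s2s] := extQ _ _ _ q (set_valP s0) s0s2 inc2.
have m0q : (m0 <= q)%N by rewrite (leq_trans m0k) // ltnW.
exists (exist _ s (mem_set Qs)), q; split=> /=.
- exact: leq_trans (leq_maxl m0' m) m0q.
- exact: (cylinderS (leq_maxl m0' m) (cylinder_trans m0q s0s2 s2s)).
move=> v /= sv [uv patv].
have s2v : cylinder s2 q (set_val v) := cylinder_trans (leqnn q) s2s sv.
(* w restricted to [0, q) lies in the exceedance set of v and extends the
   pattern u, yet it avoids the closure of F. *)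
apply: (wF (fun i => (i < q)%N && w i)); first by move=> i iq /=; rewrite iq.
apply: patv => [i /andP[iq wi]|i im /=].
  have [ik|ki] := leqP i k; last first.
    by rewrite (psum_gt_cylinder B s2v iq); apply: big2; rewrite (ltnW ki) iq.
  move: wi; rewrite w0w ?ltnS // /splice; case: ifP => [im /uv //|_].
  by rewrite (psum_gt_cylinder B s2v iq) (psum_gt_cylinder B s1s2) ?ltnS.
have ik : (i < k.+1)%N by rewrite /m0 in m0k; lia.
by rewrite (leq_trans ik kq) w0w // /splice im.
Qed.

Lemma meager_I_bounded (Q : set {ptws nat -> nat}) (I : set (set nat)) :
  extendable Q -> is_ideal I -> meager (ideal_as_subset I) ->
  meager [set s : set_type Q | I_bounded I (psum x (set_val s))].
Proof.
move=> extQ [_ _ Isub _ _] [F [ndF IF]].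
pose G (k : nat) : set (set_type Q) :=
  if @unpickle (nat * nat * nat * seq bool)%type k is Some (M, n, m, us)
  then set_val @^-1` pattern_set (F n) M%:R m (nth false us) else set0.
exists G; split.
  move=> k; rewrite /G; case: unpickle => [[[[M n] m] us]|].
    exact: nowhere_dense_pattern_set.
  by rewrite /nowhere_dense closure0 interior0.
move=> s [B _ IB].
pose M := (Num.Def.truncn B).+1.
have IM : I [set i | psum_gt M%:R (set_val s) i].
  by apply: Isub IB => i /=; apply: lt_trans; exact: truncnS_gt.
have [n [m [us pat]]] := hereditary_cover_pattern Isub IF IM.
by exists (pickle (M, n, m, us)) => //; rewrite /G pickleK.
Qed.

End PartialSums.

Theorem mainTheorem3 (R : realType) (X : completeNormedModType R) (x : nat -> X)
  (I : set (set nat)) :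
  limn_einf (fun n => (`|x n|)%:E) = 0%E ->
  is_ideal I ->
  has_Baire_property (ideal_as_subset I) ->
  (exists s, Sset s /\ ~ (exists M : R, forall n, `|psum x s n| <= M)) ->
  meager (Eset I x) /\ meager (Fset I x).
Proof.
move=> liminf0 isI BP [t [tS tU]].
have small e : 0 < e -> forall N, exists2 n, (N <= n)%N & `|x n| < e.
  by move=> e0; apply: limn_einf_lt_frequently; rewrite liminf0 lte_fin.
have Imeager := Baire_property_ideal_meager isI BP.
split.
- exact: (meager_I_bounded tS tU small Sset_extendable isI Imeager).
- exact: (meager_I_bounded tS tU small Pset_extendable isI Imeager).
Qed.
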